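(* Let $\mathcal{C}'\subset\mathbb{P}^2$ be a reduced curve and $L\subset\mathbb{P}^2$ a line with equation $\alpha_L=0$ that is not contained in $\mathcal{C}'$; let $\mathcal{C}=\mathcal{C}'\cup L$ and $\mathcal{C}''=\mathcal{C}'\cap L$. Then there is an exact sequence of $S$-modules $$0\to D(\mathcal{C}')\xrightarrow{\ \cdot\alpha_L\ } D(\mathcal{C})\xrightarrow{\ \rho\ } D(\mathcal{C}''),$$ where the first map is multiplication by $\alpha_L$ and $\rho$ is defined by reducing modulo $\alpha_L$, i.e. $\rho(\theta)$ is the derivation of $\overline{S}=S/(\alpha_L)$ induced by $\theta$.
   Context: $S=\mathbb{C}[x,y,z]$. For a reduced curve $\mathcal{C}$ defined by a reduced homogeneous $f_{\mathcal{C}}\in S$, $D(\mathcal{C})=\{\theta\in\mathrm{Der}(S):\theta(f_{\mathcal{C}})\in Sf_{\mathcal{C}}\}$. Any $\theta\in D(\mathcal{C})$ satisfies $\theta(\alpha_L)\in(\alpha_L)$, hence induces a derivation of $\overline{S}=S/(\alpha_L)$ (a polynomial ring in two variables, the homogeneous coordinate ring of $L\cong\mathbb{P}^1$). The finite set of points $\mathcal{C}''\subset L$ is defined in $\overline{S}$ by the reduced polynomial $\bar g$, the product of linear forms of $\overline{S}$ vanishing at the distinct points of $\mathcal{C}''$, and $D(\mathcal{C}'')=\{\eta\in\mathrm{Der}(\overline{S}):\eta(\bar g)\in\bar g\,\overline{S}\}$. *)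

From HB Require Import structures.
From mathcomp Require Import all_boot all_order all_algebra.
From mathcomp Require Import Rstruct.
From mathcomp Require Import complex.
From mathcomp Require Import mpoly.
Set Implicit Arguments. Unset Strict Implicit. Unset Printing Implicit Defensive.
Import Order.TTheory GRing.Theory Num.Theory.
Local Open Scope ring_scope.

Notation CC := (complex Rdefinitions.R).

(* S = C[x,y,z] (variables 'X_0,'X_1,'X_2) and a polynomial ring in two
   variables (the model of S/(alpha_L), see parametrization below). *)
Notation S := {mpoly CC[3]}.
Notation S2 := {mpoly CC[2]}.

Definition is_derivation (n : nat) (D : {mpoly CC[n]} -> {mpoly CC[n]}) : Prop :=
  [/\ (forall p q, D (p + q) = D p + D q),
      (forall (c : CC) p, D (c *: p) = c *: D p) &
      (forall p q, D (p * q) = p * D q + q * D p)].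

Definition Dmod (n : nat) (f : {mpoly CC[n]}) (D : {mpoly CC[n]} -> {mpoly CC[n]}) : Prop :=
  is_derivation D /\ exists h, D f = h * f.

(* reduced homogeneous polynomial defining a curve of P^2:
   nonzero, homogeneous of degree >= 1, no square factor of positive degree *)
Definition reduced_curve (f : S) : Prop :=
  [/\ f != 0, (exists d, f \is d.-homog), (1 < msize f)%N &
      forall h q : S, f = h * h * q -> (msize h <= 1)%N].

Definition linear_form (n : nat) (a : {mpoly CC[n]}) : Prop :=
  a != 0 /\ a \is 1.-homog.

(* l = (l_0,l_1,l_2) linear forms in (u,v) giving an injective linear map
   C^2 -> C^3 into the plane {alpha = 0}: a linear parametrization of L.
   p |-> p \mPo l is then the surjection S -> S/(alpha_L) = C[u,v]. *)
Definition parametrizes (alpha : S) (l : 3.-tuple S2) : Prop :=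
  [/\ (forall i, tnth l i \is 1.-homog),
      alpha \mPo l = 0 &
      forall w : 'I_2 -> CC, (forall i, (tnth l i).@[w] = 0) -> forall j, w j = 0].

Definition pt (l : 3.-tuple S2) (w : 'I_2 -> CC) : 'I_3 -> CC :=
  fun i => (tnth l i).@[w].

(* gbar = reduced polynomial of the finite set C'' = C' cap L in L = P^1:
   product of pairwise non-proportional linear forms, whose zeros are exactly
   the points of L lying on C' = {f' = 0}. *)
Definition gbar_of (f' : S) (l : 3.-tuple S2) (g : S2) : Prop :=
  exists (k : nat) (ls : 'I_k -> S2),
    [/\ g = \prod_(i < k) ls i,
        (forall i, linear_form (ls i)),
        (forall i j, i != j -> forall c : CC, ls i != c *: ls j) &
        (forall w : 'I_2 -> CC, (exists j, w j != 0) ->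
           ((exists i, (ls i).@[w] = 0) <-> f'.@[pt l w] = 0))].

From HB Require Import structures.
From mathcomp Require Import all_boot all_order all_algebra.
From mathcomp Require Import Rstruct complex mpoly.
From mathcomp Require Import ring zify.
From Stdlib Require Import Classical FunctionalExtensionality.
Set Implicit Arguments. Unset Strict Implicit. Unset Printing Implicit Defensive.
Import Order.TTheory GRing.Theory Num.Theory.
Local Open Scope ring_scope.

(* Composition with the parametrization l identifies S/(alpha) with C[u,v]:
   a linear section m of l shows that the kernel of p |-> p \mPo l is (alpha),
   so alpha is prime.  A derivation theta of D(C) must then preserve
   (alpha), because alpha does not divide f'; hence it descends to
   rho(theta) : q |-> theta(q \mPo m) \mPo l, which preserves (f' \mPo l).  Every
   linear factor x of g divides f' \mPo l, and in characteristic 0 a derivation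
   preserving (x^(e+1) G) with x prime not dividing G preserves (x); so rho(theta)
   preserves g.  Finally rho(theta) = 0 iff theta maps S into (alpha), i.e.
   theta = alpha theta', and theta' lies in D(C') again by primality of alpha. *)

Definition dvdr (R : comNzRingType) (a p : R) := exists q, p = a * q.

(* Euclid's property only: units are not excluded. *)
Definition prime_elem (R : comNzRingType) (a : R) :=
  forall p q, dvdr a (p * q) -> dvdr a p \/ dvdr a q.

Section Divisibility.
Variable R : comNzRingType.
Implicit Types a p q : R.

Lemma dvdr0 a : dvdr a 0. Proof. by exists 0; rewrite mulr0. Qed.
Lemma dvdrr a : dvdr a a. Proof. by exists 1; rewrite mulr1. Qed.
Lemma dvdrD a p q : dvdr a p -> dvdr a q -> dvdr a (p + q).
Proof. by move=> [x ->] [y ->]; exists (x + y); rewrite mulrDr. Qed.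
Lemma dvdr_mull a p q : dvdr a p -> dvdr a (q * p).
Proof. by move=> [x ->]; exists (q * x); rewrite mulrCA. Qed.
Lemma dvdr_mulr a p q : dvdr a p -> dvdr a (p * q).
Proof. by move=> h; rewrite mulrC; apply: dvdr_mull. Qed.

Lemma dvdr_subM a x1 y1 x2 y2 :
  dvdr a (x1 - y1) -> dvdr a (x2 - y2) -> dvdr a (x1 * x2 - y1 * y2).
Proof.
move=> h1 h2; have -> : x1 * x2 - y1 * y2 = (x1 - y1) * x2 + y1 * (x2 - y2) by ring.
by apply: dvdrD; [apply: dvdr_mulr | apply: dvdr_mull].
Qed.

End Divisibility.

Lemma exists_multiplicity (R : idomainType) n (x F : {mpoly R[n]}) :
  (1 < msize x)%N -> F != 0 -> dvdr x F ->
  exists e G, F = x ^+ e.+1 * G /\ ~ dvdr x G.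
Proof.
move=> x_size; have [N] := ubnP (msize F); elim: N F => // N IH F F_size F0 [q Fq].
have x0 : x != 0 by rewrite -msize_poly_eq0 -lt0n (ltn_trans _ x_size).
have q0 : q != 0 by apply: contraNneq F0 => q0; rewrite Fq q0 mulr0.
have [xq|] := classic (dvdr x q); last by exists 0%N, q; rewrite expr1.
have q_size : (msize q < N)%N.
  by move: F_size x_size; rewrite Fq msizeM //; move: (msize x) (msize q) => a b; lia.
have [e [G [qG G_ndvd]]] := IH q q_size q0 xq.
by exists e.+1, G; rewrite Fq qG mulrA -exprS.
Qed.

Lemma comp_mpolyM (R : comNzRingType) n k (t : n.-tuple {mpoly R[k]})
    (p q : {mpoly R[n]}) :
  (p * q) \mPo t = (p \mPo t) * (q \mPo t).
Proof. exact: rmorphM. Qed.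

Lemma comp_mpoly_comp (R : comNzRingType) n k j (p : {mpoly R[n]})
    (t : n.-tuple {mpoly R[k]}) (s : k.-tuple {mpoly R[j]}) :
  (p \mPo t) \mPo s = p \mPo [tuple tnth t i \mPo s | i < n].
Proof.
rewrite (comp_mpolyEX p t) (comp_mpolyEX p) raddf_sum /=; apply: eq_bigr => m _.
rewrite comp_mpolyZ; congr (_ *: _).
rewrite !comp_mpolyX rmorph_prod /=; apply: eq_bigr => i _.
by rewrite rmorphXn /= tnth_mktuple.
Qed.

Lemma dvdr_sub_comp (R : comNzRingType) n (a : {mpoly R[n]})
    (t : n.-tuple {mpoly R[n]}) :
  (forall i, dvdr a ('X_i - tnth t i)) -> forall p, dvdr a (p - (p \mPo t)).
Proof.
move=> aX p; rewrite {1}(mpolyE p) comp_mpolyEX -sumrB.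
apply: big_ind => [|x y|m _]; [exact: dvdr0 | exact: dvdrD |].
rewrite -scalerBr -mul_mpolyC; apply: dvdr_mull.
rewrite comp_mpolyX {1}mpolyXE_id.
apply: (big_ind2 (fun x y => dvdr a (x - y))) => [|x1 y1 x2 y2|i _].
- by rewrite subrr; apply: dvdr0.
- exact: dvdr_subM.
elim: (m i) => [|e IH]; first by rewrite !expr0 subrr; apply: dvdr0.
by rewrite !exprS; apply: dvdr_subM.
Qed.

Lemma comp_homog (R : comNzRingType) n k d (p : {mpoly R[n]}) (z : 'I_n -> R)
    (j : 'I_k) :
  p \is d.-homog -> p \mPo [tuple z i *: 'X_j | i < n] = p.@[z] *: 'X_j ^+ d.
Proof.
move=> hp; rewrite comp_mpolyEX mevalE scaler_suml; apply: eq_big_seq => m hm.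
rewrite comp_mpolyX -scalerA; congr (_ *: _).
rewrite (eq_bigr (fun i => z i ^+ m i *: 'X_j ^+ m i)); last first.
  by move=> i _; rewrite tnth_mktuple exprZn.
by rewrite scaler_prod prodrXr -mdegE (dhomog_mf hp hm).
Qed.

Lemma msize_dhomog (R : nzRingType) n d (p : {mpoly R[n]}) :
  p != 0 -> p \is d.-homog -> (d < msize p)%N.
Proof.
move=> p0 hp; have lead_p := mlead_supp p0.
by rewrite -(dhomog_mf hp lead_p); apply: msize_mdeg_lt lead_p.
Qed.

Section LinearForms.
Variable R : comNzRingType.

Definition linform n (c : 'rV[R]_n) : {mpoly R[n]} := \sum_i c 0 i *: 'X_i.

Definition linforms n k (T : 'M[R]_(n, k)) : n.-tuple {mpoly R[k]} :=
  [tuple linform (row i T) | i < n].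

Variable n : nat.
Implicit Types (c : 'rV[R]_n) (p : {mpoly R[n]}).

Lemma linform_coef c j : (linform c)@_U_(j) = c 0 j.
Proof.
rewrite /linform raddf_sum (bigD1 j) //= big1 => [|i /negbTE ne].
  by rewrite mcoeffZ mcoeffXU eqxx mulr1 addr0.
by rewrite mcoeffZ mcoeffXU ne mulr0.
Qed.

Lemma linform_inj : injective (@linform n).
Proof.
by move=> c d E; apply/rowP => j; rewrite -!linform_coef E.
Qed.

Lemma linformB c d : linform (c - d) = linform c - linform d.
Proof. by rewrite /linform -sumrB; apply: eq_bigr => i _; rewrite !mxE scalerBl. Qed.

Lemma linform0 : linform (0 : 'rV_n) = 0.
Proof. by rewrite -(subrr 0) linformB subrr. Qed.

Lemma linformZ a c : linform (a *: c) = a *: linform c.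
Proof. by rewrite /linform scaler_sumr; apply: eq_bigr => i _; rewrite mxE scalerA. Qed.

Lemma linform_delta (i : 'I_n) : linform (delta_mx 0 i) = 'X_i.
Proof.
rewrite /linform (bigD1 i) //= big1 => [|j /negbTE ne].
  by rewrite mxE !eqxx scale1r addr0.
by rewrite mxE ne andbF scale0r.
Qed.

Lemma homog1_linform p : p \is 1.-homog -> p = linform (\row_i p@_U_(i)).
Proof.
move=> hp; apply/mpolyP => m.
have [/mdeg1P [j /eqP ->]|ne] := boolP (mdeg m == 1%N).
  by rewrite linform_coef mxE.
rewrite (dhomog_nemf_coeff hp ne) /linform raddf_sum big1 //= => i _.
rewrite mcoeffZ mcoeffX; case: eqP => [e|]; last by rewrite mulr0.
by move: ne; rewrite -e mdeg1.
Qed.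

Lemma comp_linforms k c (T : 'M[R]_(n, k)) :
  linform c \mPo linforms T = linform (c *m T).
Proof.
rewrite /linform raddf_sum /=.
under eq_bigr => i _ do rewrite comp_mpolyZ comp_mpolyXU -tnth_nth tnth_mktuple
  /linform scaler_sumr.
rewrite exchange_big /=; apply: eq_bigr => j _.
by rewrite !mxE scaler_suml; apply: eq_bigr => i _; rewrite !mxE scalerA.
Qed.

Lemma meval_linform c (w : 'I_n -> R) :
  (linform c).@[w] = (c *m \col_i w i) 0 0.
Proof.
rewrite /linform raddf_sum !mxE; apply: eq_bigr => i _ /=.
by rewrite mevalZ mevalXU mxE.
Qed.

End LinearForms.

Lemma left_inverse_mod_form (F : fieldType) k (L : 'M[F]_(k.+1, k)) (a : 'rV_k.+1) :
  a != 0 -> a *m L = 0 -> (forall w : 'cV_k, L *m w = 0 -> w = 0) ->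
  exists2 M : 'M_(k, k.+1), M *m L = 1%:M &
    exists x : 'cV_k.+1, 1%:M - L *m M = x *m a.
Proof.
move=> a_neq0 aL L_inj.
have L_full : row_full L.
  rewrite /row_full -mxrank_tr -/(row_free L^T) -kermx_eq0.
  apply/eqP/row_matrixP => i; rewrite row0; apply: trmx_inj; rewrite trmx0.
  apply: L_inj; have /(congr1 (row i)) := mulmx_ker L^T.
  by rewrite row_mul row0 => /(congr1 trmx); rewrite trmx_mul trmxK trmx0.
have [M ML] := row_fullP L_full; exists M => //.
have sub_ker : (1%:M - L *m M <= kermx L)%MS.
  by rewrite sub_kermx mulmxBl mul1mx -mulmxA ML mulmx1 subrr.
have a_ker : (a <= kermx L)%MS by rewrite sub_kermx aL.
(* The left kernel of L is a line, as L has rank k. *)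
have ker_a : (kermx L <= a)%MS.
  rewrite -(geq_leqif (mxrank_leqif_sup a_ker)) mxrank_ker (eqP L_full).
  by rewrite rank_rV a_neq0 subSnn.
by apply/submxP; apply: submx_trans sub_ker ker_a.
Qed.

(* [parametrizes] is the case F = CC, k = 2. *)
Definition param_hyperplane (F : fieldType) k (alpha : {mpoly F[k.+1]})
    (l : k.+1.-tuple {mpoly F[k]}) : Prop :=
  [/\ forall i, tnth l i \is 1.-homog, alpha \mPo l = 0 &
      forall w : 'I_k -> F, (forall i, (tnth l i).@[w] = 0) -> forall j, w j = 0].

Section Hyperplane.
Variables (F : fieldType) (k : nat).
Variables (alpha : {mpoly F[k.+1]}) (l : k.+1.-tuple {mpoly F[k]}).
Hypotheses (alpha_neq0 : alpha != 0) (alpha_homog : alpha \is 1.-homog).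
Hypothesis l_param : param_hyperplane alpha l.

Lemma exists_section : exists m : k.-tuple {mpoly F[k.+1]},
  (forall j, tnth m j \mPo l = 'X_j) /\
  (forall i, dvdr alpha ('X_i - (tnth l i \mPo m))).
Proof.
case: l_param => l_homog alpha_l l_inj.
pose a := \row_i alpha@_U_(i); pose L := \matrix_(i, j) (tnth l i)@_U_(j).
have alpha_a : alpha = linform a := homog1_linform alpha_homog.
have l_L : l = linforms L.
  apply: eq_from_tnth => i; rewrite tnth_mktuple [LHS](homog1_linform (l_homog i)).
  by congr linform; apply/rowP => j; rewrite !mxE.
have [M ML [x LM]] : exists2 M : 'M_(k, k.+1), M *m L = 1%:M &
    exists x : 'cV_k.+1, 1%:M - L *m M = x *m a.
  apply: left_inverse_mod_form.
  - by apply: contraNneq alpha_neq0 => a0; rewrite alpha_a a0 linform0.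
  - by apply: linform_inj; rewrite -comp_linforms -alpha_a -l_L alpha_l linform0.
  move=> w Lw; apply/colP => j; rewrite mxE; apply: (l_inj (fun j => w j 0)) => i.
  rewrite l_L tnth_mktuple meval_linform.
  have -> : \col_j w j 0 = w by apply/colP => j'; rewrite mxE.
  by rewrite -row_mul Lw !mxE.
exists (linforms M); split.
- by move=> j; rewrite tnth_mktuple l_L comp_linforms -row_mul ML row1 linform_delta.
- move=> i; exists (x i 0)%:MP.
  rewrite l_L tnth_mktuple comp_linforms -row_mul -linform_delta -row1 -linformB.
  rewrite -linearB /= LM row_mul mulrC mul_mpolyC alpha_a -linformZ; congr linform.
  by apply/rowP => j; rewrite !mxE big_ord1 !mxE.
Qed.

Section ParamSection.
Variable m : k.-tuple {mpoly F[k.+1]}.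
Hypotheses (m_l : forall j, tnth m j \mPo l = 'X_j)
  (l_m : forall i, dvdr alpha ('X_i - (tnth l i \mPo m))).

Lemma comp_section_id q : (q \mPo m) \mPo l = q.
Proof.
rewrite comp_mpoly_comp -[RHS]comp_mpoly_id; congr comp_mpoly.
by apply: eq_from_tnth => j; rewrite !tnth_mktuple m_l.
Qed.

Lemma dvdr_sub_comp_section p : dvdr alpha (p - ((p \mPo l) \mPo m)).
Proof.
by rewrite comp_mpoly_comp; apply: dvdr_sub_comp => i; rewrite tnth_mktuple.
Qed.

End ParamSection.

Lemma comp_hyperplane_eq0 p : p \mPo l = 0 <-> dvdr alpha p.
Proof.
case: l_param => _ alpha_l _; split => [p_l|[q ->]]; last first.
  by rewrite rmorphM /= alpha_l mul0r.
have [m [m_l l_m]] := exists_section.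
by have := dvdr_sub_comp_section l_m p; rewrite p_l comp_mpoly0 subr0.
Qed.

Lemma hyperplane_prime : prime_elem alpha.
Proof.
move=> p q /comp_hyperplane_eq0; rewrite rmorphM /= => /eqP; rewrite mulf_eq0.
by case/orP => /eqP /comp_hyperplane_eq0; [left | right].
Qed.

End Hyperplane.

Lemma binary_form_root (F : fieldType) (b : {mpoly F[2]}) :
  b != 0 -> b \is 1.-homog -> exists z : 'I_2 -> F, (exists j, z j != 0) /\ b.@[z] = 0.
Proof.
move=> b_neq0 b_homog; set c := \row_i b@_U_(i).
have b_c : b = linform c := homog1_linform b_homog.
have last2 : lift ord0 ord0 = ord_max :> 'I_2 by apply: val_inj.
exists (fun u => if u == ord0 then - c 0 ord_max else c 0 ord0); split; last first.
  rewrite b_c meval_linform !mxE big_ord_recl big_ord1 !mxE last2 /=.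
  by rewrite mulrN mulrC addNr.
have [c0|c0] := eqVneq (c 0 ord0) 0; last by exists ord_max.
exists ord0; rewrite eqxx oppr_eq0; apply: contraNneq b_neq0 => c1.
rewrite b_c (_ : c = 0) ?linform0 //; apply/rowP => j; rewrite [RHS]mxE.
case: j => [[|[|//]] ?]; [rewrite -[RHS]c0 | rewrite -[RHS]c1].
  by congr (c 0 _); apply: val_inj.
by congr (c 0 _); apply: val_inj.
Qed.

Lemma param_line (F : fieldType) (b : {mpoly F[2]}) (z : 'I_2 -> F) :
  b \is 1.-homog -> b.@[z] = 0 -> (exists j, z j != 0) ->
  param_hyperplane b [tuple z u *: ('X_0 : {mpoly F[1]}) | u < 2].
Proof.
move=> b_homog bz [j zj]; split.
- by move=> u; rewrite tnth_mktuple dhomogZ // dhomogX /= mdeg1.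
- by rewrite (comp_homog _ _ b_homog) bz scale0r.
move=> w w0 i; have := w0 j; rewrite tnth_mktuple mevalZ mevalXU => /eqP.
by rewrite mulf_eq0 (negbTE zj) ord1 => /eqP.
Qed.

Lemma binary_form_prime (F : fieldType) (b : {mpoly F[2]}) :
  b != 0 -> b \is 1.-homog -> prime_elem b.
Proof.
move=> b_neq0 b_homog; have [z [z_neq0 bz]] := binary_form_root b_neq0 b_homog.
exact: hyperplane_prime b_neq0 b_homog (param_line b_homog bz z_neq0).
Qed.

Section Derivation.
Variables (n : nat) (D : {mpoly CC[n]} -> {mpoly CC[n]}).
Hypothesis D_der : is_derivation D.
Implicit Types (a f p q x : {mpoly CC[n]}).

Lemma derD p q : D (p + q) = D p + D q. Proof. by case: D_der. Qed.
Lemma derZ c p : D (c *: p) = c *: D p. Proof. by case: D_der. Qed.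
Lemma derM p q : D (p * q) = p * D q + q * D p. Proof. by case: D_der. Qed.
Lemma derN p : D (- p) = - D p. Proof. by rewrite -scaleN1r derZ scaleN1r. Qed.
Lemma derB p q : D (p - q) = D p - D q. Proof. by rewrite derD derN. Qed.
Lemma der1 : D 1 = 0.
Proof.
have := derM 1 1; rewrite mulr1 mul1r => D1.
by apply: (addrI (D 1)); rewrite -D1 addr0.
Qed.

Lemma derX p e : D (p ^+ e.+1) = e.+1%:R * (p ^+ e * D p).
Proof.
elim: e => [|e IH]; first by rewrite expr1 expr0 mul1r mul1r.
by rewrite exprS derM IH !exprS; ring.
Qed.

Lemma Dmod1 : Dmod 1 D. Proof. by split; last by exists 0; rewrite der1 mul0r. Qed.

Lemma Dmod_mul x y : Dmod x D -> Dmod y D -> Dmod (x * y) D.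
Proof.
move=> [_ [r Dx]] [_ [s Dy]]; split=> //; exists (r + s).
by rewrite derM Dx Dy; ring.
Qed.

Lemma Dmod_prod k (F : 'I_k -> {mpoly CC[n]}) :
  (forall i, Dmod (F i) D) -> Dmod (\prod_i F i) D.
Proof.
move=> DF; elim/big_ind: _ => [|x y|i _]; first exact: Dmod1.
  exact: Dmod_mul.
exact: DF.
Qed.

Lemma Dmod_dvdr_sub a p q : Dmod a D -> dvdr a (p - q) -> dvdr a (D p - D q).
Proof.
move=> [_ [h Da]] [r pq]; rewrite -derB pq derM Da.
by exists (D r + r * h); ring.
Qed.

Lemma Dmod_mul_prime f a : prime_elem a -> a != 0 -> ~ dvdr a f ->
  Dmod (f * a) D -> Dmod f D /\ Dmod a D.
Proof.
move=> a_prime a0 a_ndvd [_ [h Dfa]]; rewrite derM in Dfa.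
have : dvdr a (f * D a).
  by exists (h * f - D f); apply: (addIr (a * D f)); rewrite Dfa; ring.
case/a_prime => [//|[k Da]]; split; split=> //; last by exists k; rewrite Da mulrC.
by exists (h - k); apply: (mulfI a0); apply: (addrI (f * D a)); rewrite Dfa Da; ring.
Qed.

Lemma Dmod_prime_power x F G e : prime_elem x -> x != 0 ->
  F = x ^+ e.+1 * G -> ~ dvdr x G -> Dmod F D -> Dmod x D.
Proof.
move=> x_prime x0 -> G_ndvd [_ [h DF]]; rewrite derM derX in DF.
have key : x * (h * G - D G) = G * (e.+1%:R * D x).
  apply/eqP; rewrite -subr_eq0; apply/eqP; apply: (mulfI (expf_neq0 e x0)).
  rewrite mulr0 -(subrr (h * (x ^+ e.+1 * G))) -[X in _ = _ - X]DF exprS; ring.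
have : dvdr x (G * (e.+1%:R * D x)) by rewrite -key; apply/dvdr_mulr/dvdrr.
case/x_prime => [//|[q]]; rewrite mulr_natl -scaler_nat => Dq.
split=> //; exists ((e.+1%:R : CC)^-1 *: q).
rewrite -scalerAl [q * x]mulrC -Dq scalerA mulVf ?scale1r //.
by rewrite pnatr_eq0.
Qed.

Lemma is_derivation_mull a : is_derivation (fun p => a * D p).
Proof.
split=> [p q|c p|p q]; first by rewrite derD mulrDr.
  by rewrite derZ scalerAr.
by rewrite derM; ring.
Qed.

Lemma Dmod_mull f a : Dmod f D -> Dmod (f * a) (fun p => a * D p).
Proof.
move=> [_ [h Df]]; split; first exact: is_derivation_mull.
by exists (D a + a * h); rewrite derM Df; ring.
Qed.

Lemma Dmod_of_mull f a : prime_elem a -> a != 0 -> ~ dvdr a f ->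
  Dmod (f * a) (fun p => a * D p) -> Dmod f D.
Proof.
move=> a_prime a0 a_ndvd [_ [h Dfa]]; split=> //.
have {}Dfa : f * D a + a * D f = h * f.
  by apply: (mulfI a0); rewrite -derM Dfa; ring.
have : dvdr a (f * (h - D a)) by exists (D f); rewrite mulrBr mulrC -Dfa; ring.
case/a_prime => [//|[s hs]]; exists s; apply: (mulfI a0).
by apply: (addrI (f * D a)); rewrite Dfa -[h](subrK (D a)) hs; ring.
Qed.

End Derivation.

Lemma is_derivation_of_mull n (a : {mpoly CC[n]}) D : a != 0 ->
  is_derivation (fun p => a * D p) -> is_derivation D.
Proof.
move=> a0 [aD aZ aM]; split=> [p q|c p|p q]; apply: (mulfI a0).
- by rewrite aD mulrDr.
- by rewrite aZ scalerAr.
- by rewrite aM; ring.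
Qed.

Lemma is_derivation_conj n k (th : {mpoly CC[n]} -> {mpoly CC[n]})
    (l : n.-tuple {mpoly CC[k]}) (m : k.-tuple {mpoly CC[n]}) :
  is_derivation th -> (forall q, (q \mPo m) \mPo l = q) ->
  is_derivation (fun q => th (q \mPo m) \mPo l).
Proof.
move=> [thD thZ thM] comp_mlK; split=> [p q|c p|p q] /=.
- by rewrite !raddfD /= thD raddfD.
- by rewrite !comp_mpolyZ thZ comp_mpolyZ.
- rewrite comp_mpolyM thM comp_mpolyD; congr (_ + _).
    by rewrite -[in RHS](comp_mlK p); exact: comp_mpolyM.
  by rewrite -[in RHS](comp_mlK q); exact: comp_mpolyM.
Qed.

Section Restriction.
Variables (f' alpha : S) (l : 3.-tuple S2) (m : 2.-tuple S) (d : nat).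
Hypotheses (f'_homog : f' \is d.-homog) (alpha_neq0 : alpha != 0).
Hypotheses (alpha_homog : alpha \is 1.-homog) (alpha_ndvd : ~ dvdr alpha f').
Hypothesis l_param : param_hyperplane alpha l.
Hypotheses (m_l : forall j, tnth m j \mPo l = 'X_j)
  (l_m : forall i, dvdr alpha ('X_i - (tnth l i \mPo m))).

Definition restriction (th : S -> S) (q : S2) : S2 := th (q \mPo m) \mPo l.

Lemma restriction_unique th eta :
  (forall p, eta (p \mPo l) = th p \mPo l) -> eta = restriction th.
Proof.
move=> eta_th; apply: functional_extensionality => q.
by rewrite /restriction -eta_th comp_section_id.
Qed.

Lemma mull_restriction_eq0 th : restriction (fun p => alpha * th p) = (fun _ => 0).
Proof.
case: l_param => _ alpha_l _; apply: functional_extensionality => q.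
by rewrite /restriction comp_mpolyM alpha_l mul0r.
Qed.

Lemma dvdr_comp_of_vanishing (b : S2) : b != 0 -> b \is 1.-homog ->
    (forall z, (exists j, z j != 0) -> b.@[z] = 0 -> f'.@[pt l z] = 0) ->
  dvdr b (f' \mPo l).
Proof.
move=> b_neq0 b_homog b_f'; have [z [z_neq0 bz]] := binary_form_root b_neq0 b_homog.
apply/(comp_hyperplane_eq0 b_neq0 b_homog (param_line b_homog bz z_neq0)).
rewrite comp_mpoly_comp.
have -> : [tuple tnth l u \mPo [tuple z v *: 'X_0 | v < 2] | u < 3] =
          [tuple pt l z u *: ('X_0 : {mpoly CC[1]}) | u < 3].
  case: l_param => l_homog _ _; apply: eq_from_tnth => u.
  by rewrite !tnth_mktuple (comp_homog _ _ (l_homog u)) expr1.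
by rewrite (comp_homog _ _ f'_homog) b_f' ?scale0r.
Qed.

Section Theta.
Variable th : S -> S.
Hypothesis th_Dmod : Dmod (f' * alpha) th.

Let alpha_prime := hyperplane_prime alpha_neq0 alpha_homog l_param.
Let th_der : is_derivation th := proj1 th_Dmod.
Let th_f'_alpha := Dmod_mul_prime th_der alpha_prime alpha_neq0 alpha_ndvd th_Dmod.

Lemma restriction_comp p : restriction th (p \mPo l) = th p \mPo l.
Proof.
have [_ th_alpha] := th_f'_alpha.
apply/esym/eqP; rewrite -subr_eq0 -comp_mpolyB; apply/eqP.
apply/(comp_hyperplane_eq0 alpha_neq0 alpha_homog l_param).
exact: Dmod_dvdr_sub th_alpha (dvdr_sub_comp_section l_m p).
Qed.

Lemma restriction_der : is_derivation (restriction th).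
Proof. exact: is_derivation_conj th_der (comp_section_id m_l). Qed.

Lemma restriction_Dmod_comp : Dmod (f' \mPo l) (restriction th).
Proof.
have [[_ [r th_f']] _] := th_f'_alpha.
split; first exact: restriction_der.
by exists (r \mPo l); rewrite restriction_comp th_f' comp_mpolyM.
Qed.

Lemma restriction_Dmod g : gbar_of f' l g -> Dmod g (restriction th).
Proof.
move=> [k [ls [-> ls_lin _ ls_roots]]]; apply: (Dmod_prod restriction_der) => i.
have [ls_neq0 ls_homog] := ls_lin i.
have F_neq0 : f' \mPo l != 0.
  by apply/eqP => /(comp_hyperplane_eq0 alpha_neq0 alpha_homog l_param).
have ls_F : dvdr (ls i) (f' \mPo l).
  apply: dvdr_comp_of_vanishing => // z z_neq0 ls_z.
  by apply/(ls_roots z z_neq0); exists i.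
have [e [G [FG G_ndvd]]] :=
  exists_multiplicity (msize_dhomog ls_neq0 ls_homog) F_neq0 ls_F.
exact: (Dmod_prime_power restriction_der (binary_form_prime ls_neq0 ls_homog)
  ls_neq0 FG G_ndvd restriction_Dmod_comp).
Qed.

Lemma restriction_eq0 : restriction th = (fun _ => 0) ->
  exists th', Dmod f' th' /\ th = (fun p => alpha * th' p).
Proof.
move=> rho0; have th_dvdr p : exists q, th p == alpha * q.
  have /(comp_hyperplane_eq0 alpha_neq0 alpha_homog l_param) [q ->] : th p \mPo l = 0.
    by rewrite -restriction_comp rho0.
  by exists q.
pose th' p := xchoose (th_dvdr p).
have th_th' : th = (fun p => alpha * th' p).
  by apply: functional_extensionality => p; apply/eqP/(xchooseP (th_dvdr p)).
exists th'; split=> //.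
have th'_der : is_derivation th'.
  by apply: is_derivation_of_mull alpha_neq0 _; rewrite -th_th'.
by apply: Dmod_of_mull th'_der _ _ alpha_prime alpha_neq0 alpha_ndvd _; rewrite -th_th'.
Qed.

End Theta.
End Restriction.

Theorem proposition2p10 (f' alpha : S) (l : 3.-tuple S2) (g : S2) :
  reduced_curve f' ->
  linear_form alpha ->
  ~ (exists q : S, f' = alpha * q) ->
  parametrizes alpha l ->
  gbar_of f' l g ->
  (* D(C') --(. alpha)--> D(C) is well defined and injective *)
  (forall th, Dmod f' th -> Dmod (f' * alpha) (fun p => alpha * th p)) /\
  (forall th, Dmod f' th -> (fun p => alpha * th p) = (fun _ => 0) ->
              th = (fun _ => 0)) /\
  (* rho : D(C) -> D(C'') is well defined *)
  (forall th, Dmod (f' * alpha) th ->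
     exists eta, Dmod g eta /\ forall p, eta (p \mPo l) = th p \mPo l) /\
  (* exactness at D(C): ker rho = alpha . D(C') *)
  (forall th eta, Dmod (f' * alpha) th ->
     (forall p, eta (p \mPo l) = th p \mPo l) ->
     (eta = (fun _ => 0) <->
        exists th', Dmod f' th' /\ th = (fun p => alpha * th' p))).
Proof.
move=> [_ [d f'_homog] _ _] [alpha_neq0 alpha_homog] alpha_ndvd l_param g_def.
have [m [m_l l_m]] := exists_section alpha_neq0 alpha_homog l_param.
split; [|split; [|split]].
- by move=> th th_Dmod; exact: (Dmod_mull (proj1 th_Dmod)).
- move=> th _ alpha_th0; apply: functional_extensionality => p.
  by apply: (mulfI alpha_neq0); rewrite mulr0 (congr1 (@^~ p) alpha_th0).
- move=> th th_Dmod; exists (restriction l m th); split.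
    exact: (restriction_Dmod f'_homog alpha_neq0 alpha_homog alpha_ndvd l_param
              m_l l_m th_Dmod g_def).
  exact: (restriction_comp alpha_neq0 alpha_homog alpha_ndvd l_param l_m th_Dmod).
move=> th eta th_Dmod eta_th; rewrite (restriction_unique m_l eta_th); split.
  exact: (restriction_eq0 alpha_neq0 alpha_homog alpha_ndvd l_param l_m th_Dmod).
by move=> [th' [_ ->]]; exact: (mull_restriction_eq0 m l_param).
Qed.
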